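(* Let $(\mathcal{C},\psi)$ be a limited t-pair with $\operatorname{typ}(\mathcal{U}^{ai}_{\mathcal{C}\psi})=\alpha$. Then $\operatorname{typ}(\mathcal{U}^{di}_{\mathcal{C}\psi})\in\{\alpha,\beta\}$.
   Context: Let $\mathbb{N}=\{0,1,2,\dots\}$; for an integer $k\ge 2$ let $E_k=\{0,1,\dots,k-1\}$; let $\mathcal{P}(\mathbb{N})$ be the set of nonempty finite subsets of $\mathbb{N}$. Let $F$ be a nonempty set (of attribute names). A decision table $T\in\mathcal{M}_k(F)$ is a rectangular table with $n\ge 1$ columns labeled with attributes $f_1,\dots,f_n\in F$ (any two columns labeled with the same attribute are equal), whose rows are pairwise different tuples from $E_k^n$ (the set of rows may be empty), each row being labeled with a set of decisions from $\mathcal{P}(\mathbb{N})$. Write $At(T)=\{f_1,\dots,f_n\}$ and $\Delta(T)$ for the set of rows. For a word $\alpha=(f_{i_1},\delta_1)\cdots(f_{i_m},\delta_m)$ with $f_{i_j}\in At(T)$, $\delta_j\in E_k$, the subtable $T\alpha$ consists of the rows of $T$ having value $\delta_j$ in column $f_{i_j}$ for all $j$ ($T\lambda=T$ for the empty word $\lambda$). Operations on tables: (1) removal of a column from a table with at least two columns (if groups of equal rows appear, only the first row of each group, with its decision set, is kept); (2) changing of decisions: the decision sets attached to rows are replaced arbitrarily by sets from $\mathcal{P}(\mathbb{N})$; (3) permutation of columns: swap two columns together with their attribute labels; (4) duplication of columns: add a copy of a column (with its label) next to it. A set $\mathcal{C}\subseteq\mathcal{M}_k(F)$ is a closed class if every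 table obtained from a table of $\mathcal{C}$ by finitely many such operations belongs to $\mathcal{C}$. A decision tree over $\mathcal{M}_k(F)$ is a finite directed tree with a root (unique node with no entering edge) and at least two nodes such that the root and the edges leaving the root are unlabeled, each worker node (neither root nor terminal) is labeled with an attribute from $F$, each edge leaving a worker node is labeled with a number from $E_k$, and each terminal node is labeled with a number from $\mathbb{N}$. For a complete path $\xi$ (root to terminal node) whose worker nodes are labeled $f_{j_1},\dots,f_{j_m}$ in order, with the edges leaving them labeled $\delta_1,\dots,\delta_m$, put $\pi(\xi)=(f_{j_1},\delta_1)\cdots(f_{j_m},\delta_m)$, $\varphi(\xi)=f_{j_1}\cdots f_{j_m}$ (both empty if $m=0$), and let $\tau(\xi)$ be the label of its terminal node. A nondeterministic decision tree for $T$ is a decision tree $\Gamma$ whose worker-node attributes lie in $At(T)$, such that $\bigcup_{\xi}\Delta(T\pi(\xi))=\Delta(T)$ (union over complete paths), and for every row $r\in\Delta(T)$ and every complete path $\xi$ with $r\in\Delta(T\pi(\xi))$, $\tau(\xi)$ belongs to the decision set of $r$. A decision tree is deterministic if exactly one edge leaves the root and the edges leaving each worker node have pairwise different labels; a deterministic decision tree for $T$ is a deterministic decision tree that is a nondeterministic decision tree for $T$. A complexity measure over $\mathcal{M}_k(F)$ is any map $\psi:F^*\to\mathbb{N}$, where $F^*$ is the set of finite words over $F$ including the empty word $\lambda$. It is limited if for all words (a) $\psi(\alpha_1\alpha_2)\le\psi(\alpha_1)+\psi(\alpha_2)$, (b) $\psi(\alpha_1\alpha_2\alpha_3)\ge\psi(\alpha_1\alpha_3)$,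 (c) $\psi(\alpha)\ge|\alpha|$. For a tree, $\psi(\Gamma)=\max_\xi\psi(\varphi(\xi))$ over complete paths. For $T$ with columns labeled $f_1,\dots,f_n$: $\psi^i(T)=\psi(f_1\cdots f_n)$, $\psi^d(T)$ is the minimum complexity of a deterministic decision tree for $T$, $\psi^a(T)$ the minimum complexity of a nondeterministic decision tree for $T$. A t-pair $(\mathcal{C},\psi)$ consists of a closed class $\mathcal{C}\subseteq\mathcal{M}_k(F)$ and a complexity measure $\psi$ over $\mathcal{M}_k(F)$; it is limited if $\psi$ is limited. For $b,c\in\{i,d,a\}$ define the partial function $\mathcal{U}^{bc}_{\mathcal{C}\psi}(n)=\max\{\psi^b(T):T\in\mathcal{C},\psi^c(T)\le n\}$ (defined iff this set is nonempty and finite). For a partial function $g:\mathbb{N}\to\mathbb{N}$ with domain $\mathrm{Dom}(g)$, let $\mathrm{Dom}^+(g)=\{n\in\mathrm{Dom}(g):g(n)\ge n\}$, $\mathrm{Dom}^-(g)=\{n\in\mathrm{Dom}(g):g(n)\le n\}$. Its type $\operatorname{typ}(g)$ is: $\alpha$ if $\mathrm{Dom}(g)$ is infinite and $g$ is bounded above; $\beta$ if $\mathrm{Dom}(g)$ is infinite, $\mathrm{Dom}^+(g)$ is finite and $g$ is unbounded above; $\gamma$ if $\mathrm{Dom}^+(g)$ and $\mathrm{Dom}^-(g)$ are both infinite; $\delta$ if $\mathrm{Dom}(g)$ is infinite and $\mathrm{Dom}^-(g)$ is finite; $\epsilon$ if $\mathrm{Dom}(g)$ is finite. *)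

From mathcomp Require Import all_boot.
From mathcomp Require Import finmap.
From Stdlib Require List.

Set Implicit Arguments.
Unset Strict Implicit.
Unset Printing Implicit Defensive.

Local Open Scope fset_scope.

Section Tables.
Variable F : Type.

Record table := Table {
  tattr : seq F;
  trows : seq (seq nat * {fset nat}) }.

Definition has_val (T : table) (r : seq nat) (f : F) (d : nat) : Prop :=
  List.In (f, d) (zip (tattr T) r).

Definition wf_table (k : nat) (T : table) : Prop :=
  0 < size (tattr T) /\
  uniq (map fst (trows T)) /\
  (forall r, r \in trows T ->
     [/\ size r.1 = size (tattr T), all (fun x => x < k) r.1 & r.2 != fset0]) /\
  (* any two columns labelled with the same attribute are equal *)
  (forall r, r \in trows T -> forall f d d',
     has_val T r.1 f d -> has_val T r.1 f d' -> d = d').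

Definition inAt (T : table) (f : F) : Prop := List.In f (tattr T).

Definition in_sub (T : table) (alpha : seq (F * nat))
    (r : seq nat * {fset nat}) : Prop :=
  r \in trows T /\ (forall fd, List.In fd alpha -> has_val T r.1 fd.1 fd.2).

Definition rem_at {A : Type} (i : nat) (s : seq A) : seq A :=
  take i s ++ drop i.+1 s.

Fixpoint dedup_aux (seen : seq (seq nat)) (s : seq (seq nat * {fset nat})) :=
  match s with
  | [::] => [::]
  | r :: s' => if r.1 \in seen then dedup_aux seen s'
               else r :: dedup_aux (r.1 :: seen) s'
  end.
Definition dedup_rows s := dedup_aux [::] s.

Definition swap_idx (i j l : nat) : nat :=
  if l == i then j else if l == j then i else l.

Definition swap_seq {A : Type} (i j : nat) (s : seq A) : seq A :=
  match s with
  | [::] => [::]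
  | x0 :: _ => [seq nth x0 s (swap_idx i j l) | l <- iota 0 (size s)]
  end.

Definition dup_at {A : Type} (i : nat) (s : seq A) : seq A :=
  take i.+1 s ++ drop i s.

Inductive op_step : table -> table -> Prop :=
| op_remove T i :
    1 < size (tattr T) -> i < size (tattr T) ->
    op_step T (Table (rem_at i (tattr T))
                     (dedup_rows [seq (rem_at i r.1, r.2) | r <- trows T]))
| op_change T (D : seq {fset nat}) :
    size D = size (trows T) -> all (fun X => X != fset0) D ->
    op_step T (Table (tattr T) (zip (map fst (trows T)) D))
| op_swap T i j :
    i < size (tattr T) -> j < size (tattr T) ->
    op_step T (Table (swap_seq i j (tattr T))
                     [seq (swap_seq i j r.1, r.2) | r <- trows T])
| op_dup T i :
    i < size (tattr T) ->
    op_step T (Table (dup_at i (tattr T))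
                     [seq (dup_at i r.1, r.2) | r <- trows T]).

Inductive op_reach : table -> table -> Prop :=
| reach_refl T : op_reach T T
| reach_step T1 T2 T3 : op_step T1 T2 -> op_reach T2 T3 -> op_reach T1 T3.

Definition closed_class (k : nat) (C : table -> Prop) : Prop :=
  (forall T, C T -> wf_table k T) /\
  (forall T T', C T -> op_reach T T' -> C T').

(* Decision trees.  A tree is given by the list of subtrees hanging    *)
(* from the (unlabelled) root; a node is either terminal (labelled by  *)
(* a number) or a worker node labelled by an attribute, with a list of *)
(* outgoing edges labelled by numbers.                                 *)
Inductive node :=
| Leaf of nat
| Work of F & seq (nat * node).

Definition dtree := seq node.

Fixpoint wf_node (k : nat) (v : node) : bool :=
  match v with
  | Leaf _ => true
  | Work _ ch => (0 < size ch) && all (fun e => (e.1 < k) && wf_node k e.2) ch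
  end.

(* a decision tree over M_k(F): at least two nodes *)
Definition wf_tree (k : nat) (G : dtree) : bool :=
  (0 < size G) && all (wf_node k) G.

Fixpoint node_attrs (v : node) : seq F :=
  match v with
  | Leaf _ => [::]
  | Work f ch => f :: flatten (map (fun e => node_attrs e.2) ch)
  end.

Definition tree_attrs (G : dtree) : seq F := flatten (map node_attrs G).

Fixpoint npaths (v : node) : seq (seq (F * nat) * nat) :=
  match v with
  | Leaf d => [:: ([::], d)]
  | Work f ch =>
      flatten (map (fun e => map (fun p => ((f, e.1) :: p.1, p.2)) (npaths e.2)) ch)
  end.

Definition paths (G : dtree) := flatten (map npaths G).

Fixpoint det_node (v : node) : bool :=
  match v with
  | Leaf _ => true
  | Work _ ch => uniq (map fst ch) && all (fun e => det_node e.2) ch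
  end.

Definition det_tree (G : dtree) : bool := (size G == 1) && all det_node G.

Definition is_ndt (k : nat) (T : table) (G : dtree) : Prop :=
  wf_tree k G /\
  (forall f, List.In f (tree_attrs G) -> inAt T f) /\
  (forall r, (exists xi, List.In xi (paths G) /\ in_sub T xi.1 r) <-> r \in trows T) /\
  (forall r xi, r \in trows T -> List.In xi (paths G) -> in_sub T xi.1 r ->
     xi.2 \in r.2).

Definition is_dt (k : nat) (T : table) (G : dtree) : Prop :=
  det_tree G /\ is_ndt k T G.

Definition limited (psi : seq F -> nat) : Prop :=
  (forall a1 a2, psi (a1 ++ a2) <= psi a1 + psi a2) /\
  (forall a1 a2 a3, psi (a1 ++ a2 ++ a3) >= psi (a1 ++ a3)) /\
  (forall a, psi a >= size a).

Definition tree_cost (psi : seq F -> nat) (G : dtree) : nat :=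
  \max_(xi <- paths G) psi (map fst xi.1).

Definition is_min (P : nat -> Prop) (m : nat) : Prop :=
  P m /\ forall x, P x -> m <= x.
Definition is_max (P : nat -> Prop) (m : nat) : Prop :=
  P m /\ forall x, P x -> x <= m.

Inductive kind := Ki | Kd | Ka.

Definition psi_kind (k : nat) (psi : seq F -> nat) (b : kind) (T : table) (m : nat)
  : Prop :=
  match b with
  | Ki => m = psi (tattr T)
  | Kd => is_min (fun c => exists G, is_dt k T G /\ tree_cost psi G = c) m
  | Ka => is_min (fun c => exists G, is_ndt k T G /\ tree_cost psi G = c) m
  end.

Definition U_graph (k : nat) (C : table -> Prop) (psi : seq F -> nat) (b c : kind)
    (n m : nat) : Prop :=
  is_max (fun x => exists T x', C T /\ psi_kind k psi b T x /\
                                psi_kind k psi c T x' /\ x' <= n) m.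

End Tables.

Definition finite_nat (P : nat -> Prop) : Prop :=
  exists s : seq nat, forall n, P n -> n \in s.

Section Typ.
Variable g : nat -> nat -> Prop.
Definition Dom n := exists m, g n m.
Definition DomP n := exists m, g n m /\ n <= m.
Definition DomM n := exists m, g n m /\ m <= n.
Definition bounded_above := exists b, forall n m, g n m -> m <= b.
End Typ.

Inductive ftype := TAlpha | TBeta | TGamma | TDelta | TEpsilon.

Definition typ_is (g : nat -> nat -> Prop) (t : ftype) : Prop :=
  match t with
  | TAlpha => ~ finite_nat (Dom g) /\ bounded_above g
  | TBeta => ~ finite_nat (Dom g) /\ finite_nat (DomP g) /\ ~ bounded_above g
  | TGamma => ~ finite_nat (DomP g) /\ ~ finite_nat (DomM g)
  | TDelta => ~ finite_nat (Dom g) /\ finite_nat (DomM g)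
  | TEpsilon => finite_nat (Dom g)
  end.

(* If U^{ai} has type alpha, its values are bounded by some c and, its domain
   being infinite, every table T of the class has psi^a(T) <= c.

   A set S of columns is witnessed around a row u if for every j in S some row
   differs from u at j but at no other column of S.  Projecting T onto S and
   giving every row its own singleton decision set stays inside the class; a
   nondeterministic tree for the projection must query every column of S on a
   path covering u, for otherwise the witness of that column would follow the
   same path and receive the decision of u.  Hence S has at most c columns,
   each of weight psi [f] <= c.

   A minimal set of columns on which at most one row of R matches a pattern is
   witnessed (around the matching row, or, after dropping one column, around a
   witness), so it consists of at most c+1 light columns.  With the columnwise
   plurality values as pattern such a set splits R into blocks of at most half
   its size; with a row as pattern it shows that T has at most (mk+1)^(c+1)
   rows.  Splitting repeatedly yields a deterministic tree whose paths make
   O(c^2 log (mk)) queries of weight at most c, so psi^d(T) = O(log psi^i(T)),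
   since m <= psi^i(T).  Therefore
   U^{di} is defined wherever U^{ai} is and U^{di}(n) < n for large n. *)

From mathcomp Require Import all_boot finmap zify.
From Stdlib Require Import Classical.

Set Implicit Arguments.
Unset Strict Implicit.
Unset Printing Implicit Defensive.

Section ListIn.
Variable A : Type.
Implicit Types (x : A) (s : seq A).

Lemma In_nth x0 s j : j < size s -> List.In (nth x0 s j) s.
Proof. by elim: s j => [|a s IH] [|j] //= Hj; [left | right; apply: IH]. Qed.

Lemma In_nth_inv x0 x s : List.In x s -> exists2 j, j < size s & nth x0 s j = x.
Proof.
elim: s => [|a s IH] //= [->|/IH [j Hj <-]]; first by exists 0.
by exists j.+1.
Qed.

Lemma In_map (B : Type) (f : A -> B) y s :
  List.In y (map f s) <-> exists x, List.In x s /\ y = f x.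
Proof.
elim: s => [|a s IH] /=; first by split=> // [[x []]].
rewrite IH; split.
- by case=> [<-|[x [Hx ->]]]; [exists a; split; [left|] | exists x; split; [right|]].
- by case=> x [[<-|Hx] ->]; [left | right; exists x].
Qed.

Lemma In_flatten x (ss : seq (seq A)) :
  List.In x (flatten ss) <-> exists s, List.In s ss /\ List.In x s.
Proof.
elim: ss => [|s ss IH] /=; first by split=> // [[s []]].
rewrite List.in_app_iff IH; split.
- by case=> [Hx|[s' [Hs' Hx]]]; [exists s; split; [left|] | exists s'; split; [right|]].
- by case=> s' [[<-|Hs'] Hx]; [left | right; exists s'].
Qed.

Lemma all_In (p : pred A) s : (forall x, List.In x s -> p x) -> all p s.
Proof.
elim: s => [|a s IH] //= H; apply/andP; split; first by apply: H; left.
by apply: IH => x Hx; apply: H; right.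
Qed.

Lemma In_mask_inv x0 x m s :
  List.In x (mask m s) -> exists j, [/\ j < size s, nth false m j & x = nth x0 s j].
Proof.
elim: s m => [|a s IH] [|[] m] //=.
- by case=> [<-|/IH [j [Hj Hm ->]]]; [exists 0 | exists j.+1].
- by move=> /IH [j [Hj Hm ->]]; exists j.+1.
Qed.

Lemma In_mask x0 m s j :
  j < size s -> nth false m j -> List.In (nth x0 s j) (mask m s).
Proof.
elim: s m j => [|a s IH] [|[] m] [|j] //= Hj Hm; [by left | right |]; exact: IH.
Qed.

Lemma bigmax_le_In (g : A -> nat) s b :
  (forall x, List.In x s -> g x <= b) -> \max_(x <- s) g x <= b.
Proof.
elim: s => [|a s IH] H; first by rewrite big_nil.
rewrite big_cons geq_max H /=; last by left.
by apply: IH => x Hx; apply: H; right.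
Qed.

Lemma leq_bigmax_In (g : A -> nat) s x :
  List.In x s -> g x <= \max_(y <- s) g y.
Proof.
elim: s => [|a s IH] //= [<-|Hx]; rewrite big_cons; first exact: leq_maxl.
exact: leq_trans (IH Hx) (leq_maxr _ _).
Qed.

Lemma choice_pairs (P : nat -> A -> Prop) (l : seq nat) :
  (forall w, w \in l -> exists x, P w x) ->
  exists ch : seq (nat * A), map fst ch = l /\ forall e, List.In e ch -> P e.1 e.2.
Proof.
elim: l => [|w l IH] H; first by exists [::].
have [x Hx] := H w (mem_head _ _).
have [ch [Hch1 Hch2]] := IH (fun w' Hw' => H w' (mem_behead (s := w :: l) Hw')).
by exists ((w, x) :: ch); split; [rewrite /= Hch1 | move=> e /= [<-|/Hch2]].
Qed.

End ListIn.

Lemma In_mem (A : eqType) (x : A) s : List.In x s <-> x \in s.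
Proof.
elim: s => [|a s IH] //=; rewrite in_cons IH; split.
- by case=> [->|->]; rewrite ?eqxx ?orbT.
- by case/orP=> [/eqP->|]; [left | right].
Qed.

Lemma zip_mask (A B : Type) m (s : seq A) (t : seq B) :
  size s = size t -> zip (mask m s) (mask m t) = mask m (zip s t).
Proof. by elim: s t m => [|a s IH] [|b t] [|[] m] //= [/IH ->]. Qed.

Lemma uniq_map_inj (A B : eqType) (f : A -> B) s x y :
  uniq (map f s) -> x \in s -> y \in s -> f x = f y -> x = y.
Proof.
elim: s => [|a s IH] //= /andP [Ha Hu]; rewrite !in_cons.
case/orP=> [/eqP->|Hx]; case/orP=> [/eqP->|Hy] // E.
- by move: Ha; rewrite E map_f.
- by move: Ha; rewrite -E map_f.
- exact: IH.
Qed.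

Lemma size_le1_uniq (A : eqType) (s : seq A) :
  uniq s -> {in s &, forall x y, x = y} -> size s <= 1.
Proof.
case: s => [|a [|b s]] //= /andP [Ha _] H.
by move: Ha; rewrite (H a b) ?inE ?eqxx ?orbT.
Qed.

Lemma size_le1_eq (A : eqType) (s : seq A) x y :
  size s <= 1 -> x \in s -> y \in s -> x = y.
Proof. by case: s => [|a [|b s]] //= _; rewrite !inE => /eqP -> /eqP ->. Qed.

Lemma leq_size_rel_inj (A B : eqType) (P : A -> B -> Prop) (s : seq A) (t : seq B) :
  uniq s -> (forall x, x \in s -> exists2 y, y \in t & P x y) ->
  (forall x x' y, x \in s -> x' \in s -> P x y -> P x' y -> x = x') ->
  size s <= size t.
Proof.
elim: s t => [|a s IH] t //= /andP [Ha Hu] Hex Hinj.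
have [y Hy Pay] := Hex a (mem_head _ _).
rewrite (perm_size (perm_to_rem Hy)) ltnS; apply: IH => // [x Hx|x x' z Hx Hx'].
- have [y' Hy' Pxy'] := Hex x (mem_behead (s := a :: s) Hx).
  exists y' => //; rewrite (perm_mem (perm_to_rem Hy)) in_cons in Hy'.
  case/orP: Hy' => // /eqP Ey; subst y'.
  by move: Ha; rewrite -(Hinj _ _ _ (mem_behead (s := a :: s) Hx) (mem_head _ _) Pxy' Pay) Hx.
- by apply: Hinj; apply: (mem_behead (s := a :: s)).
Qed.

Lemma ex_argmax_seq (g : nat -> nat) (l : seq nat) :
  l != [::] -> exists2 x, x \in l & forall y, y \in l -> g y <= g x.
Proof.
elim: l => [|a l IH] // _; case: (eqVneq l [::]) => [->|/IH [x Hx Hmax]].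
  by exists a; rewrite ?mem_head // => y; rewrite inE => /eqP ->.
case: (leqP (g a) (g x)) => Hax.
- by exists x; rewrite ?in_cons ?Hx ?orbT // => y; rewrite in_cons => /orP [/eqP ->|/Hmax].
- exists a; rewrite ?mem_head // => y; rewrite in_cons => /orP [/eqP ->//|/Hmax Hy].
  exact: leq_trans Hy (ltnW Hax).
Qed.

Lemma ex_minimum (P : nat -> Prop) : (exists n, P n) -> exists n, is_min P n.
Proof.
move=> [n Pn]; apply: NNPP => Hno.
suff : forall x y, y <= x -> ~ P y by move/(_ n n (leqnn n)).
elim=> [|x IH] y Hy Py; apply: Hno; exists y; split=> // n' Pn'.
  by move: Hy; rewrite leqn0 => /eqP ->.
apply: NNPP => /negP; rewrite -ltnNge => Hlt.
by apply: (IH n') => //; rewrite -ltnS (leq_trans Hlt).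
Qed.

Lemma ex_maximum (P : nat -> Prop) b :
  (exists n, P n) -> (forall n, P n -> n <= b) -> exists n, is_max P n.
Proof.
move=> [n0 Pn0] Hb.
have [[|y] [Hy Hmin]] := ex_minimum (ex_intro (fun y => forall n, P n -> n <= y) b Hb).
- exists 0; split=> [|n /Hy //]; by have := Hy n0 Pn0; rewrite leqn0 => /eqP <-.
- exists y.+1; split=> //; apply: NNPP => NPy.
  have : y.+1 <= y by apply: Hmin => n Pn; rewrite -ltnS ltn_neqAle Hy ?andbT //;
    apply/eqP => E; apply: NPy; rewrite -E.
  by rewrite ltnn.
Qed.

Lemma infinite_unbounded (P : nat -> Prop) :
  ~ finite_nat P -> forall b, exists n, P n /\ b <= n.
Proof.
move=> Hinf b; apply: NNPP => Hno; apply: Hinf; exists (iota 0 b) => n Pn.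
rewrite mem_iota add0n /=; apply: NNPP => /negP; rewrite -leqNgt => Hbn.
by apply: Hno; exists n.
Qed.

Lemma take_nth_drop (A : Type) (x0 : A) i s :
  i < size s -> s = take i s ++ nth x0 s i :: drop i.+1 s.
Proof. by move=> Hi; rewrite -drop_nth // cat_take_drop. Qed.

Section RemAt.
Variable A : Type.
Implicit Types (s : seq A) (msk : bitseq).

Lemma size_rem_at i s : i < size s -> size (rem_at i s) = (size s).-1.
Proof. by move=> Hi; rewrite /rem_at size_cat size_take size_drop Hi; lia. Qed.

Lemma count_rem_at (a : pred A) x0 i s :
  i < size s -> count a s = count a (rem_at i s) + a (nth x0 s i).
Proof. by move=> Hi; rewrite {1}(take_nth_drop x0 Hi) /rem_at !count_cat /=; lia. Qed.

Lemma mask_rem_at msk s i : size msk = size s -> i < size s -> ~~ nth false msk i ->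
  mask msk s = mask (rem_at i msk) (rem_at i s).
Proof.
case: s => [|a s] // Hs Hi /negbTE Hn.
rewrite {1}(take_nth_drop a Hi) {1}(take_nth_drop false (i := i) (s := msk)) ?Hs //.
by rewrite mask_cat ?size_take ?Hs // Hn /= -mask_cat // !size_take Hs.
Qed.

Lemma mask_count_negb0 msk s : count negb msk = 0 -> size msk = size s -> mask msk s = s.
Proof. by elim: msk s => [|[] msk IH] [|a s] //= H [Hs]; rewrite IH. Qed.

End RemAt.

Section RemAtEq.
Variable A : eqType.
Implicit Types (s : seq A).

Lemma rem_at_subset i s : {subset rem_at i s <= s}.
Proof. by move=> x; rewrite mem_cat => /orP [/mem_take|/mem_drop]. Qed.

Lemma mem_rem_at x0 i s x : i < size s -> x \in s -> x \in rem_at i s \/ x = nth x0 s i.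
Proof.
move=> Hi; rewrite {1}(take_nth_drop x0 Hi) mem_cat in_cons.
by case/orP=> [H|/orP [/eqP->|H]]; [left | right | left]; rewrite // mem_cat H ?orbT.
Qed.

Lemma uniq_rem_at i s : uniq s -> uniq (rem_at i s).
Proof.
case: (ltnP i (size s)) => Hi; last by rewrite /rem_at take_oversize ?drop_oversize ?cats0 // ltnW.
case: s Hi => [|a s] // Hi; rewrite {1}(take_nth_drop a Hi) /rem_at !cat_uniq /=.
by case/and3P=> -> /norP [_ ->] /andP [_ ->].
Qed.

Lemma nth_notin_rem_at x0 i s : uniq s -> i < size s -> nth x0 s i \notin rem_at i s.
Proof.
move=> Hu Hi; move: Hu; rewrite {1}(take_nth_drop x0 Hi) cat_uniq /=.
by case/and3P=> _ /norP [H1 _] /andP [H2 _]; rewrite mem_cat negb_or H1.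
Qed.

Lemma mem_rem_at_neq x0 i s x :
  i < size s -> x \in s -> x != nth x0 s i -> x \in rem_at i s.
Proof. by move=> Hi Hx /eqP Nx; case: (mem_rem_at x0 Hi Hx). Qed.

Lemma rem_at_dup x0 i j s :
  i < j -> j < size s -> nth x0 s i = nth x0 s j -> rem_at j s =i s.
Proof.
move=> Hij Hj Eij x; apply/idP/idP; first exact: rem_at_subset.
move=> Hx; case: (mem_rem_at x0 Hj Hx) => // ->; rewrite -Eij mem_cat.
by rewrite -(nth_take x0 Hij) mem_nth ?size_take ?Hj.
Qed.

End RemAtEq.

(** * Tables *)

Notation row := (seq nat * {fset nat})%type.

Definition col (j : nat) (r : row) : nat := nth 0 r.1 j.

Definition agree_on (z : nat -> nat) (S : seq nat) (r : row) : bool :=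
  all (fun j => col j r == z j) S.

Definition block (R : seq row) (S : seq nat) (t : row) : seq row :=
  [seq r <- R | agree_on (col^~ t) S r].

Section Operations.
Variable F : Type.
Implicit Types (T : table F) (r : row).

Lemma op_reach_trans T1 T2 T3 : op_reach T1 T2 -> op_reach T2 T3 -> op_reach T1 T3.
Proof. by elim=> // A B D H1 _ IH /IH; apply: reach_step. Qed.

Lemma mem_dedup_aux seen s r : r \in dedup_aux seen s -> r \in s.
Proof.
elim: s seen => [|x s IH] seen //=; case: ifP => _.
- by move/IH; rewrite in_cons orbC => ->.
- by rewrite !in_cons => /orP [->|/IH ->]; rewrite ?orbT.
Qed.

Lemma dedup_aux_has seen s r : r \in s -> r.1 \notin seen ->
  exists2 r', r' \in dedup_aux seen s & r'.1 = r.1.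
Proof.
elim: s seen => [|x s IH] seen //=; rewrite in_cons => /orP [/eqP ->|Hr] Hn.
  by rewrite (negbTE Hn); exists x; rewrite ?mem_head.
case: ifP => Hx; first exact: IH.
case: (eqVneq r.1 x.1) => [E|Ne]; first by exists x; rewrite ?mem_head.
have [|r' Hr' E] := IH (x.1 :: seen) Hr; first by rewrite in_cons negb_or Ne.
by exists r'; rewrite // in_cons Hr' orbT.
Qed.

Lemma step_remove_column T i : 1 < size (tattr T) -> i < size (tattr T) ->
  exists T1, [/\ op_step T T1, tattr T1 = rem_at i (tattr T),
    (forall r1, r1 \in trows T1 -> exists2 r, r \in trows T & r1.1 = rem_at i r.1) &
    (forall r, r \in trows T -> exists2 r1, r1 \in trows T1 & r1.1 = rem_at i r.1)].
Proof.
move=> H1 Hi; eexists; split; [exact: (op_remove H1 Hi) | by [] | |].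
- by move=> r1 /mem_dedup_aux /mapP [r Hr ->]; exists r.
- move=> r Hr; have Hin : (rem_at i r.1, r.2) \in [seq (rem_at i r.1, r.2) | r <- trows T].
    exact: (map_f (fun r => (rem_at i r.1, r.2))).
  by have [r1 Hr1 E] := dedup_aux_has (seen := [::]) Hin isT; exists r1.
Qed.

Lemma reach_mask_columns T msk : true \in msk -> size msk = size (tattr T) ->
  (forall r, r \in trows T -> size r.1 = size (tattr T)) ->
  exists T', [/\ op_reach T T', tattr T' = mask msk (tattr T),
    (forall r', r' \in trows T' -> exists2 r, r \in trows T & r'.1 = mask msk r.1) &
    (forall r, r \in trows T -> exists2 r', r' \in trows T' & r'.1 = mask msk r.1)].
Proof.
move Hn: (count negb msk) => n; elim: n T msk Hn => [|n IH] T msk Hn Ht Hs Hrs.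
  exists T; split; rewrite ?mask_count_negb0 //; first exact: reach_refl.
  - by move=> r' Hr'; exists r'; rewrite ?mask_count_negb0 ?Hrs.
  - by move=> r Hr'; exists r; rewrite ?mask_count_negb0 ?Hrs.
have Hhas : has negb msk by rewrite has_count Hn.
pose i := find negb msk.
have Hi : i < size msk by rewrite -has_find.
have Hni : ~~ nth false msk i by apply: (nth_find false Hhas).
have Hsz : 1 < size (tattr T).
  have : 0 < count id msk by rewrite -has_count; apply/hasP; exists true.
  have Eid : count (predC negb) msk = count id msk by apply: eq_count => -[].
  by rewrite -Hs -(count_predC negb) Hn Eid; lia.
have [T1 [Hstep Ha1 Hr1 Hr1']] := step_remove_column Hsz (leq_trans Hi (eq_leq Hs)).
have Emask (B : Type) (x : seq B) : size x = size (tattr T) ->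
    mask msk x = mask (rem_at i msk) (rem_at i x).
  by move=> Hx; apply: mask_rem_at; rewrite ?Hx -?Hs.
have Hn1 : count negb (rem_at i msk) = n.
  by move: Hn; rewrite (count_rem_at negb false Hi) (negbTE Hni) addn1 => [[]].
have Ht1 : true \in rem_at i msk.
  by case: (mem_rem_at false Hi Ht) => // E; rewrite -E in Hni.
have Hs1 : size (rem_at i msk) = size (tattr T1) by rewrite Ha1 !size_rem_at -?Hs.
have Hrs1 : forall r1, r1 \in trows T1 -> size r1.1 = size (tattr T1).
  by move=> r1 /Hr1 [r Hr0 ->]; rewrite Ha1 !size_rem_at ?Hrs -?Hs.
have [T' [HT' Ha' Hr' Hr'']] := IH T1 _ Hn1 Ht1 Hs1 Hrs1.
exists T'; split.
- exact: reach_step Hstep HT'.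
- by rewrite Ha' Ha1 Emask.
- by move=> r' /Hr' [r1 /Hr1 [r Hr ->] ->]; exists r; rewrite // Emask ?Hrs.
- move=> r Hr; have [r1 Hr1r E1] := Hr1' r Hr; have [r' Hr2 E'] := Hr'' r1 Hr1r.
  by exists r'; rewrite // E' E1 Emask ?Hrs.
Qed.

Lemma step_index_decisions T : exists T'', [/\ op_step T T'', tattr T'' = tattr T,
    (forall r, r \in trows T'' -> exists i, r = (nth [::] (map fst (trows T)) i, [fset i]%fset)) &
    (forall x, x \in map fst (trows T) -> exists i, (x, [fset i]%fset) \in trows T'')].
Proof.
set X := map fst (trows T); set Ds := [seq [fset i]%fset | i <- iota 0 (size (trows T))].
have HsX : size X = size (trows T) by rewrite size_map.
have HsDs : size Ds = size (trows T) by rewrite size_map size_iota.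
have Hsz : size (zip X Ds) = size X by rewrite size_zip HsX HsDs minnn.
have HDs i : i < size X -> nth fset0 Ds i = [fset i]%fset.
  by move=> Hi; rewrite (nth_map 0) ?size_iota -?HsX // nth_iota.
exists (Table (tattr T) (zip X Ds)); split=> //.
- apply: op_change => //; apply/allP => D /mapP [i _ ->].
  by apply/fset0Pn; exists i; apply: fset11.
- move=> r /(nthP (([::] : seq nat), fset0)) [i Hi <-]; rewrite Hsz in Hi.
  by exists i; rewrite nth_zip ?HDs // HsDs.
- move=> x Hx; exists (index x X).
  have Hi : index x X < size X by rewrite index_mem.
  rewrite -{1}(nth_index [::] Hx) -(HDs _ Hi) -nth_zip ?HsDs //.
  by apply: mem_nth; rewrite Hsz.
Qed.

End Operations.

Section WellFormedTable.
Variables (F : Type) (f0 : F) (k : nat) (T : table F).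
Hypothesis wfT : wf_table k T.
Local Notation m := (size (tattr T)).
Local Notation lab j := (nth f0 (tattr T) j).

Lemma row_wf r : r \in trows T ->
  [/\ size r.1 = m, all (fun x => x < k) r.1 & r.2 != fset0].
Proof. by case: wfT => _ [_ [H _]] /H. Qed.

Lemma has_val_functional r f d d' :
  r \in trows T -> has_val T r.1 f d -> has_val T r.1 f d' -> d = d'.
Proof. by case: wfT => _ [_ [_ H]] /H; apply. Qed.

Lemma has_val_col r j : r \in trows T -> j < m -> has_val T r.1 (lab j) (col j r).
Proof.
move=> Hr Hj; have [Hs _ _] := row_wf Hr.
rewrite /has_val /col -(nth_zip f0 0) ?Hs //.
by apply: In_nth; rewrite size_zip Hs minnn.
Qed.

Lemma col_lt r j : r \in trows T -> j < m -> col j r < k.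
Proof. by move=> Hr Hj; have [Hs Hk _] := row_wf Hr; apply: (allP Hk); rewrite mem_nth ?Hs. Qed.

Lemma rows_uniq : uniq (trows T).
Proof. by case: wfT => _ [Hu _]; apply: map_uniq Hu. Qed.

Lemma row_inj r r' : r \in trows T -> r' \in trows T -> r.1 = r'.1 -> r = r'.
Proof. by case: wfT => _ [Hu _]; apply: uniq_map_inj. Qed.

Lemma row_eq_of_agree r r' : r \in trows T -> r' \in trows T ->
  agree_on (col^~ r') (iota 0 m) r -> r = r'.
Proof.
move=> Hr Hr' Ha; apply: row_inj => //.
have [Hs _ _] := row_wf Hr; have [Hs' _ _] := row_wf Hr'.
apply: (eq_from_nth (x0 := 0)); rewrite ?Hs ?Hs' // => i Hi.
by apply/eqP; apply: (allP Ha); rewrite mem_iota.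
Qed.

End WellFormedTable.

(** * Deterministic trees by repeated splitting *)

Section Paths.
Variable F : Type.

Lemma In_npaths_Work f ch xi :
  List.In xi (npaths (Work f ch)) <->
  exists e : nat * node F, List.In e ch /\
    exists p : seq (F * nat) * nat, List.In p (npaths e.2) /\ xi = ((f, e.1) :: p.1, p.2).
Proof.
rewrite /= In_flatten; split.
- by move=> [s [/In_map [e [He ->]] /In_map [p [Hp ->]]]]; exists e; split=> //; exists p.
- move=> [e [He [p [Hp ->]]]]; eexists; split; first by apply/In_map; exists e.
  by apply/In_map; exists p.
Qed.

End Paths.

Section DecisionTreeBuilder.
Variables (F : Type) (f0 : F) (k : nat) (T : table F).
Hypothesis wfT : wf_table k T.
Variable light : F -> Prop.
Local Notation m := (size (tattr T)).
Local Notation lab j := (nth f0 (tattr T) j).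

Definition consistent (r : row) (al : seq (F * nat)) : Prop :=
  forall fd, List.In fd al -> has_val T r.1 fd.1 fd.2.

Definition good_node (R : seq row) (v : node F) (B : nat) : Prop :=
  [/\ wf_node k v, det_node v, (forall f, List.In f (node_attrs v) -> inAt T f),
   (forall xi, List.In xi (npaths v) ->
      size xi.1 <= B /\ forall fd, List.In fd xi.1 -> light fd.1) &
   (forall r, r \in R -> exists xi, List.In xi (npaths v) /\ consistent r xi.1) /\
   (forall xi r, List.In xi (npaths v) -> r \in R -> consistent r xi.1 -> xi.2 \in r.2)].

Lemma good_node_mono R v B B' : B <= B' -> good_node R v B -> good_node R v B'.
Proof.
move=> HB [H1 H2 H3 H4 H5]; split=> // xi /H4 [Hs Hl].
by split=> //; apply: leq_trans HB.
Qed.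

Lemma good_leaf R : {subset R <= trows T} -> size R <= 1 -> exists v, good_node R v 0.
Proof.
case: R => [|r [|//]] HR _.
  by exists (Leaf F 0); split=> //= xi [<-|].
have [_ _ /fset0Pn [d Hd]] := row_wf wfT (HR r (mem_head _ _)).
exists (Leaf F d); split=> //= [xi [<-|]//|]; split.
- by move=> r0; rewrite inE => /eqP ->; exists ([::], d); split; [left|].
- by move=> xi r0 [<-|] //; rewrite inE => /eqP ->.
Qed.

Lemma good_query (j : nat) (R : seq row) B :
  j < m -> light (lab j) -> {subset R <= trows T} -> R != [::] ->
  (forall w, w \in undup (map (col j) R) ->
     exists v, good_node [seq r <- R | col j r == w] v B) ->
  exists v, good_node R v B.+1.
Proof.
move=> Hjm Hlj HR Rn0 Hch.
have [ch [Hfst Hgood]] := choice_pairs Hch.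
have Hval e : List.In e ch -> e.1 \in undup (map (col j) R).
  by move=> He; rewrite -Hfst; apply/In_mem/In_map; exists e.
exists (Work (lab j) ch); split.
- rewrite /= -(size_map fst) Hfst; apply/andP; split.
    have [r Hr] : exists r, r \in R by case: (R) Rn0 => // r R' _; exists r; rewrite mem_head.
    have : col j r \in undup (map (col j) R) by rewrite mem_undup map_f.
    by case: (undup _).
  apply: all_In => e He; have [-> _ _ _ _] := Hgood e He; rewrite andbT.
  by have /[!mem_undup] /mapP [r Hr ->] := Hval e He; apply: col_lt (HR r Hr) Hjm.
- rewrite /= Hfst undup_uniq /=.
  by apply: all_In => e He; have [_ -> _ _ _] := Hgood e He.
- move=> f /= [<-|/In_flatten [s [/In_map [e [He ->]] Hf]]]; first exact: In_nth.
  by have [_ _ H _ _] := Hgood e He; apply: H.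
- move=> xi /In_npaths_Work [e [He [p [Hp ->]]]] /=.
  have [_ _ _ H _] := Hgood e He; have [Hs Hl] := H p Hp.
  by split=> // fd [<-|/Hl].
split.
- move=> r Hr.
  have : List.In (col j r) (map fst ch) by rewrite Hfst; apply/In_mem; rewrite mem_undup map_f.
  move=> /In_map [e [He Ee]]; have [_ _ _ _ [Hcov _]] := Hgood e He.
  have [|p [Hp Hcp]] := Hcov r; first by rewrite mem_filter -Ee eqxx Hr.
  exists ((lab j, e.1) :: p.1, p.2); split.
    by apply/In_npaths_Work; exists e; split=> //; exists p.
  move=> fd /= [<-|/Hcp //]; rewrite /= -Ee; exact: (has_val_col f0 wfT (HR r Hr) Hjm).
- move=> xi r /In_npaths_Work [e [He [p [Hp ->]]]] Hr Hcons /=.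
  have [_ _ _ _ [_ Hdec]] := Hgood e He.
  apply: Hdec => // [|fd Hfd]; last by apply: Hcons; right.
  have E := has_val_functional wfT (HR r Hr) (Hcons _ (or_introl erefl))
    (has_val_col f0 wfT (HR r Hr) Hjm).
  by rewrite mem_filter Hr andbT /= -E.
Qed.

Lemma good_query_set (S : seq nat) (B : nat) :
  (forall j, j \in S -> j < m /\ light (lab j)) ->
  forall R : seq row, {subset R <= trows T} -> R != [::] ->
  (forall t, t \in R -> exists v, good_node (block R S t) v B) ->
  exists v, good_node R v (size S + B).
Proof.
elim: S => [|j S IH] HS R HR Rn0 Hc.
  case: R HR Rn0 Hc => [|t R] // HR _ /(_ t (mem_head _ _)) [v Hv].
  by exists v; move: Hv; rewrite /block (eq_filter (a2 := predT)) ?filter_predT.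
have [Hjm Hlj] := HS j (mem_head _ _).
apply: (good_query Hjm Hlj HR Rn0) => w; rewrite mem_undup => /mapP [r0 Hr0 ->].
apply: IH => [j' Hj'|r||t].
- by apply: HS; rewrite in_cons Hj' orbT.
- by rewrite mem_filter => /andP [_ /HR].
- by apply/eqP => /(congr1 (fun s => r0 \in s)); rewrite mem_filter eqxx Hr0.
- rewrite mem_filter => /andP [/eqP Ht /Hc [v Hv]]; exists v; move: Hv.
  rewrite /block -filter_predI; congr good_node; apply: eq_filter => r /=.
  by rewrite /agree_on /= -Ht andbC.
Qed.

Definition halving_selector (s : nat) : Prop :=
  forall R : seq row, {subset R <= trows T} -> uniq R -> 1 < size R ->
  exists S, [/\ size S <= s, forall j, j \in S -> j < m /\ light (lab j) &
    forall t, t \in R -> size (block R S t) <= maxn 1 (size R %/ 2)].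

Lemma good_node_halving s : halving_selector s -> forall n (R : seq row),
  {subset R <= trows T} -> uniq R -> size R <= 2 ^ n -> exists v, good_node R v (n * s).
Proof.
move=> Hsel; elim=> [|n IH] R HR Hu Hsz.
  by have [v Hv] := good_leaf HR Hsz; exists v; apply: good_node_mono Hv.
case: (leqP (size R) 1) => H1.
  by have [v Hv] := good_leaf HR H1; exists v; apply: good_node_mono Hv.
have [S [HSs HSl HSh]] := Hsel R HR Hu H1.
have Rn0 : R != [::] by case: (R) H1.
have Hblocks t : t \in R -> exists v, good_node (block R S t) v (n * s).
  move=> Ht; apply: IH; [|exact: filter_uniq|].
  - by move=> r; rewrite mem_filter => /andP [_ /HR].
  - apply: leq_trans (HSh t Ht) _; rewrite geq_max expn_gt0 /=.
    by apply: leq_trans (leq_div2r 2 Hsz) _; rewrite expnS mulKn.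
have [v Hv] := good_query_set HSl HR Rn0 Hblocks.
by exists v; apply: good_node_mono Hv; rewrite mulSn leq_add2r.
Qed.

Lemma good_node_dt v B : good_node (trows T) v B ->
  is_dt k T [:: v] /\ forall xi, List.In xi (paths [:: v]) ->
     size xi.1 <= B /\ forall fd, List.In fd xi.1 -> light fd.1.
Proof.
move=> [H1 H2 H3 H4 [H5 H6]].
have Ep : paths [:: v] = npaths v by rewrite /paths /= cats0.
rewrite Ep; split=> //; split; first by rewrite /det_tree /= H2.
rewrite /is_ndt Ep; split; first by rewrite /wf_tree /= H1.
split; first by move=> f; rewrite /tree_attrs /= cats0; apply: H3.
split; last by move=> r xi Hr Hxi [_ Hc]; apply: H6.
move=> r; split; first by move=> [xi [_ []]].
by move=> /[dup] Hr /H5 [xi [Hxi Hc]]; exists xi.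
Qed.

End DecisionTreeBuilder.

Section ExistenceOfDecisionTrees.
Variables (F : Type) (f0 : F) (k : nat) (T : table F).
Hypothesis wfT : wf_table k T.

Lemma halving_all_selector : halving_selector f0 T (fun _ => True) (size (tattr T)).
Proof.
move=> R HR Hu _; exists (iota 0 (size (tattr T))); split=> [||t Ht]; rewrite ?size_iota //.
  by move=> j; rewrite mem_iota.
apply: leq_trans (leq_maxl _ _); apply: size_le1_uniq; first exact: filter_uniq.
have Hblock r : r \in block R (iota 0 (size (tattr T))) t -> r = t.
  by rewrite mem_filter => /andP [Ha Hr]; apply: (row_eq_of_agree wfT (HR _ Hr) (HR _ Ht) Ha).
by move=> x y /Hblock -> /Hblock ->.
Qed.

Lemma dt_exists : exists G, is_dt k T G.
Proof.
have Hsz : size (trows T) <= 2 ^ size (trows T) by apply/ltnW/ltn_expl.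
have [v Hv] := good_node_halving wfT halving_all_selector (fun r H => H) (rows_uniq wfT) Hsz.
by have [H _] := good_node_dt Hv; exists [:: v].
Qed.

End ExistenceOfDecisionTrees.


(** * Classes of bounded nondeterministic complexity *)

Section LimitedMeasure.
Variables (F : Type) (psi : seq F -> nat).
Hypothesis Hlim : limited psi.

Lemma size_le_psi w : size w <= psi w.
Proof. by case: Hlim => _ [_ H]. Qed.

Lemma psi_singleton_le f w : List.In f w -> psi [:: f] <= psi w.
Proof.
case: Hlim => _ [Hmono _] Hf; have [s1 [s2 ->]] := List.in_split f w Hf.
apply: leq_trans (Hmono [::] s1 (f :: s2)).
by have := Hmono [:: f] s2 [::]; rewrite !cats0.
Qed.

Lemma psi_le_light c w : (forall f, List.In f w -> psi [:: f] <= c) ->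
  psi w <= c * size w + psi [::].
Proof.
case: Hlim => Hsub _; elim: w => [|f w IH] H /=; first by rewrite muln0.
apply: leq_trans (Hsub [:: f] w) _; rewrite mulnS -addnA leq_add //; first by apply: H; left.
by apply: IH => g Hg; apply: H; right.
Qed.

Lemma leq_tree_cost G xi : List.In xi (paths G) -> psi (map fst xi.1) <= tree_cost psi G.
Proof. exact: (leq_bigmax_In (fun xi : seq (F * nat) * nat => psi (map fst xi.1))). Qed.

End LimitedMeasure.

Definition column_mask (m : nat) (S : seq nat) : bitseq := [seq j \in S | j <- iota 0 m].

Definition witnessed (R : seq row) (z : nat -> nat) (S : seq nat) : Prop :=
  forall j, j \in S -> exists2 y, y \in R &
    col j y != z j /\ forall j', j' \in S -> j' != j -> col j' y = z j'.

Lemma witnessed_sub R R' z S : {subset R <= R'} -> witnessed R z S -> witnessed R' z S.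
Proof. by move=> HR Hw j Hj; have [y Hy H] := Hw j Hj; exists y; first exact: HR. Qed.

Lemma witnessed_subset R z S S' : {subset S' <= S} -> witnessed R z S -> witnessed R z S'.
Proof.
by move=> HS Hw j /[dup] Hj /HS /Hw [y Hy [Hne Hag]]; exists y => //; split=> // j' /HS; apply: Hag.
Qed.

Lemma eq_witnessed R z z' S : {in S, z =1 z'} -> witnessed R z S -> witnessed R z' S.
Proof.
move=> Ez Hw j Hj; have [y Hy [Hne Hag]] := Hw j Hj.
by exists y; rewrite // -Ez //; split=> // j' Hj' Nj; rewrite -Ez ?Hag.
Qed.

Section Projection.
Variables (F : Type) (f0 : F) (k : nat) (T : table F).
Hypothesis wfT : wf_table k T.
Local Notation m := (size (tattr T)).
Local Notation lab j := (nth f0 (tattr T) j).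
Variable S : seq nat.
Hypothesis HSm : forall j, j \in S -> j < m.
Local Notation msk := (column_mask m S).

Lemma nth_column_mask j : j < m -> nth false msk j = (j \in S).
Proof. by move=> Hj; rewrite (nth_map 0) ?size_iota // nth_iota. Qed.

Lemma witnessed_lab_inj u j j' : u \in trows T -> witnessed (trows T) (col^~ u) S ->
  j \in S -> j' \in S -> lab j = lab j' -> j = j'.
Proof.
move=> Hu Hw Hj Hj' El; case: (eqVneq j j') => // Nj.
have [y Hy [Hne Hag]] := Hw j Hj.
have same_cols (r : row) : r \in trows T -> col j r = col j' r.
  move=> Hr; apply: (has_val_functional wfT Hr (has_val_col f0 wfT Hr (HSm Hj))).
  by rewrite El; apply: (has_val_col f0 wfT Hr (HSm Hj')).
by move: Hne; rewrite same_cols // (same_cols u) // Hag ?eqxx // eq_sym.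
Qed.

Variable P : table F.
Hypothesis attrP : tattr P = mask msk (tattr T).
Hypothesis rowP : forall r, r \in trows T -> exists i, (mask msk r.1, [fset i]%fset) \in trows P.
Hypothesis idxP : forall x x' i,
  (x, [fset i]%fset) \in trows P -> (x', [fset i]%fset) \in trows P -> x = x'.

Lemma has_val_mask_inv r f d : r \in trows T -> has_val P (mask msk r.1) f d ->
  exists2 j, j \in S & f = lab j /\ d = col j r.
Proof.
move=> Hr; have [Hs _ _] := row_wf wfT Hr.
rewrite /has_val attrP zip_mask ?Hs // => /(In_mask_inv (f0, 0)) [j [Hj Hm]].
rewrite size_zip Hs minnn in Hj; rewrite nth_column_mask // in Hm.
by rewrite nth_zip ?Hs // => -[-> ->]; exists j.
Qed.

Lemma has_val_mask r j : r \in trows T -> j \in S -> has_val P (mask msk r.1) (lab j) (col j r).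
Proof.
move=> Hr Hj; have [Hs _ _] := row_wf wfT Hr.
rewrite /has_val attrP zip_mask ?Hs // /col -(nth_zip f0 0) ?Hs //.
by apply: In_mask; rewrite ?size_zip ?Hs ?minnn ?nth_column_mask ?HSm.
Qed.

(* Decisions of P identify projected rows and the witness of j projects
   differently from u, so the path covering u must separate them, which only
   a query of lab j can do. *)
Lemma covering_path_queries G xi u iu j : is_ndt k P G -> List.In xi (paths G) ->
  u \in trows T -> (mask msk u.1, [fset iu]%fset) \in trows P ->
  in_sub P xi.1 (mask msk u.1, [fset iu]%fset) ->
  witnessed (trows T) (col^~ u) S -> j \in S -> List.In (lab j) (map fst xi.1).
Proof.
move=> [_ [_ [_ Hdec]]] Hxi Hu Hu' [_ Hcu] Hw Hj.
have Hxi2 : xi.2 = iu by have := Hdec _ xi Hu' Hxi (conj Hu' Hcu); rewrite in_fset1 => /eqP.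
have [y Hy [Hne Hag]] := Hw j Hj.
have [iy Hy'] := rowP Hy.
have Hinc : ~ forall fd, List.In fd xi.1 -> has_val P (mask msk y.1) fd.1 fd.2.
  move=> Hcy; have := Hdec _ xi Hy' Hxi (conj Hy' Hcy).
  rewrite Hxi2 in_fset1 => /eqP Eiu; rewrite -Eiu in Hy'.
  have := has_val_mask Hu Hj; rewrite (idxP Hu' Hy') => /(has_val_mask_inv Hy) [j2 Hj2 [El Ec]].
  have Ejj := witnessed_lab_inj Hu Hw Hj Hj2 El.
  by move: Hne; rewrite Ec Ejj eqxx.
have [fd [Hfd Hnv]] : exists fd, List.In fd xi.1 /\ ~ has_val P (mask msk y.1) fd.1 fd.2.
  by apply: NNPP => Hn; apply: Hinc => fd Hfd; apply: NNPP => Hnv; apply: Hn; exists fd.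
have [j' Hj' [Ef Ed]] := has_val_mask_inv Hu (Hcu fd Hfd).
case: (eqVneq j' j) => [Ej|Nj]; first by apply/In_map; exists fd; rewrite Ef Ej.
by case: Hnv; rewrite Ef Ed -(Hag j' Hj' Nj); apply: has_val_mask.
Qed.

End Projection.

Lemma witness_of_drop (R : seq row) z S p : uniq R -> p < size S ->
  size [seq r <- R | agree_on z S r] <= 1 < size [seq r <- R | agree_on z (rem_at p S) r] ->
  exists2 y, y \in R & col (nth 0 S p) y != z (nth 0 S p) /\
    forall j', j' \in S -> j' != nth 0 S p -> col j' y = z j'.
Proof.
move=> Hu Hp /andP [Hle Hgt].
have [y Hy Hny] : exists2 y, y \in [seq r <- R | agree_on z (rem_at p S) r] & ~~ agree_on z S y.
  apply/hasP; apply: contraTT Hgt => /hasPn Hall; rewrite -leqNgt.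
  apply: leq_trans Hle; apply: uniq_leq_size; first exact: filter_uniq.
  move=> x Hx; move: (Hall x Hx); rewrite negbK mem_filter => ->.
  by move: Hx; rewrite mem_filter => /andP [].
move: Hy; rewrite mem_filter => /andP [Hay HyR]; exists y; first exact: HyR.
have Hag j' : j' \in S -> j' != nth 0 S p -> col j' y = z j'.
  by move=> Hj' Nj; apply/eqP; apply: (allP Hay); apply: (mem_rem_at_neq Hp Hj' Nj).
split=> //; apply: contra Hny => /eqP Ep; apply/allP => j Hj.
by case: (eqVneq j (nth 0 S p)) => [->|Nj]; rewrite ?Ep ?Hag.
Qed.

Section SeparatingSets.
Variables (F : Type) (k : nat) (T : table F).
Hypothesis wfT : wf_table k T.
Local Notation m := (size (tattr T)).

Lemma minimal_separating_set (R : seq row) (z : nat -> nat) :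
  {subset R <= trows T} -> uniq R -> 1 < size R ->
  exists S : seq nat, [/\ S != [::], uniq S, forall j, j \in S -> j < m,
    size [seq r <- R | agree_on z S r] <= 1 & witnessed R z S].
Proof.
move=> HR Hu H2.
pose separating S := (forall j, j \in S -> j < m) /\ size [seq r <- R | agree_on z S r] <= 1.
have Hfull : separating (iota 0 m).
  split=> [j|]; first by rewrite mem_iota.
  apply: size_le1_uniq; first exact: filter_uniq.
  move=> x y; rewrite !mem_filter => /andP [Hx HxR] /andP [Hy HyR].
  apply: (row_eq_of_agree wfT (HR _ HxR) (HR _ HyR)).
  by apply/allP => j Hj; rewrite (eqP (allP Hx j Hj)) (eqP (allP Hy j Hj)).
have [n0 [[S0 [HS0s [HS0m HS0f]]] Hmin]] :=
  ex_minimum (ex_intro (fun n => exists S, size S = n /\ separating S) _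
                       (ex_intro _ _ (conj (size_iota 0 m) Hfull))).
have Hdrop p : p < size S0 -> 1 < size [seq r <- R | agree_on z (rem_at p S0) r].
  move=> Hp; rewrite ltnNge; apply/negP => Hle.
  have : n0 <= (size S0).-1.
    apply: Hmin; exists (rem_at p S0); split; first exact: size_rem_at.
    by split=> // j /rem_at_subset /HS0m.
  by rewrite HS0s; lia.
have HS0n : S0 != [::].
  apply: contraTneq H2 => E; rewrite -leqNgt; move: HS0f.
  by rewrite E (eq_filter (a2 := predT)) ?filter_predT.
have HuS0 : uniq S0.
  apply/(uniqPn 0); case=> i [j [Hij Hj Eij]].
  have := Hdrop j Hj; rewrite (eq_filter (a2 := agree_on z S0)) ?ltnNge ?HS0f //.
  by move=> r; apply: eq_all_r; apply: rem_at_dup Hij Hj Eij.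
exists S0; split=> // j Hj; rewrite -(nth_index 0 Hj).
by apply: witness_of_drop; rewrite ?index_mem ?HS0f ?Hdrop ?index_mem.
Qed.

End SeparatingSets.

Lemma plurality_pattern (R : seq row) : R != [::] -> exists z : nat -> nat, forall j,
  (exists2 r, r \in R & col j r = z j) /\
  forall w, count (fun r => col j r == w) R <= count (fun r => col j r == z j) R.
Proof.
move=> Rn; pose cnt j w := count (fun r => col j r == w) R.
have Hex j : exists x, (x \in map (col j) R) && all (fun w => cnt j w <= cnt j x) (map (col j) R).
  have [|x Hx Hmax] := ex_argmax_seq (cnt j) (l := map (col j) R); first by case: (R) Rn.
  by exists x; rewrite Hx; apply/allP => w /Hmax.
exists (fun j => xchoose (Hex j)) => j.
have /andP [/mapP [r Hr Er] /allP Hmax] := xchooseP (Hex j).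
split=> [|w]; first by exists r.
case: (boolP (w \in map (col j) R)) => [/Hmax //|Hw].
rewrite -/(cnt j w) (_ : cnt j w = 0) //; apply/eqP; rewrite -leqn0 leqNgt -has_count.
by apply: contra Hw => /hasP [r0 Hr0 /eqP <-]; apply: map_f.
Qed.

(* (c+1) L splitting rounds, L = log2 (mk+1) + 1, each of at most c+1 queries of
   weight at most c; e is the weight psi [::] of the empty word. *)
Definition dt_bound (e c k m : nat) : nat :=
  c * c.+1 ^ 2 * (trunc_log 2 (m * k).+1).+1 + e.

Fixpoint words (A : seq (nat * nat)) (n : nat) : seq (seq (nat * nat)) :=
  if n is n'.+1 then [::] :: [seq a :: w | a <- A, w <- words A n'] else [:: [::]].

Lemma words_mem A n w : size w <= n -> all (mem A) w -> w \in words A n.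
Proof.
elim: n w => [|n IH] [|a w] //=; rewrite ?inE ?eqxx // => Hs /andP [Ha Hw].
by rewrite allpairs_f ?orbT ?IH.
Qed.

Lemma size_words A n : size (words A n) <= (size A).+1 ^ n.
Proof.
elim: n => [|n IH] //=; rewrite size_allpairs expnS mulSn.
have := leq_mul (leqnn (size A)) IH; have : 0 < (size A).+1 ^ n by rewrite expn_gt0.
lia.
Qed.

Definition column_values (m k : nat) : seq (nat * nat) :=
  [seq (j, v) | j <- iota 0 m, v <- iota 0 k].

Section ClassWithBoundedNondeterministicComplexity.
Variables (F : Type) (f0 : F) (k : nat) (C : table F -> Prop) (psi : seq F -> nat) (c : nat).
Hypothesis HCC : closed_class k C.
Hypothesis Hlim : limited psi.
Hypothesis HC : forall T, C T -> exists G, is_ndt k T G /\ tree_cost psi G <= c.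
Variable T : table F.
Hypothesis CT : C T.
Local Notation m := (size (tattr T)).
Local Notation lab j := (nth f0 (tattr T) j).

Lemma class_wf : wf_table k T.
Proof. by case: HCC => H _; apply: H. Qed.

Lemma class_projection (S : seq nat) : S != [::] -> (forall j, j \in S -> j < m) ->
  exists P, [/\ C P, tattr P = mask (column_mask m S) (tattr T),
    (forall r, r \in trows T -> exists i, (mask (column_mask m S) r.1, [fset i]%fset) \in trows P) &
    (forall x x' i, (x, [fset i]%fset) \in trows P -> (x', [fset i]%fset) \in trows P -> x = x')].
Proof.
move=> HSn HSm.
have Hmsk : size (column_mask m S) = m by rewrite size_map size_iota.
have Htrue : true \in column_mask m S.
  have [j Hj] : exists j, j \in S by case: (S) HSn => // j S' _; exists j; rewrite mem_head.
  by rewrite -Hj -(nth_column_mask S (HSm j Hj)); apply: mem_nth; rewrite Hmsk HSm.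
have Hrs r : r \in trows T -> size r.1 = m by case/(row_wf class_wf).
have [T' [HT' Ha' _ Hr']] := reach_mask_columns Htrue Hmsk Hrs.
have [P [HP HaP HrP HxP]] := step_index_decisions T'.
have HidxP x i : (x, [fset i]%fset) \in trows P -> x = nth [::] (map fst (trows T')) i.
  by move=> /HrP [i' [-> E]]; move: (fset11 i); rewrite E in_fset1 => /eqP ->.
exists P; split.
- case: HCC => _ Hcl; apply: (Hcl T) => //.
  exact: op_reach_trans HT' (reach_step HP (reach_refl _)).
- by rewrite HaP Ha'.
- by move=> r /Hr' [r' Hr'' <-]; apply: HxP; apply: map_f.
- by move=> x x' i /HidxP -> /HidxP ->.
Qed.

Lemma witnessed_small (S : seq nat) (u : row) : uniq S -> (forall j, j \in S -> j < m) ->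
  u \in trows T -> witnessed (trows T) (col^~ u) S ->
  size S <= c /\ forall j, j \in S -> psi [:: lab j] <= c.
Proof.
move=> HuS HSm Hu Hw; case: (eqVneq S [::]) => [->|HSn]; first by split.
have [P [CP HaP HrP HxP]] := class_projection HSn HSm.
have [G [HG Hcost]] := HC CP.
have [iu Hu'] := HrP u Hu.
have [xi [Hxi Hcov]] :
    exists xi, List.In xi (paths G) /\ in_sub P xi.1 (mask (column_mask m S) u.1, [fset iu]%fset).
  by case: HG => _ [_ [Hc _]]; apply/Hc.
have Hon j : j \in S -> List.In (lab j) (map fst xi.1).
  exact: (covering_path_queries f0 class_wf HSm HaP HrP HxP HG Hxi Hu Hu' Hcov Hw).
have Hxic : psi (map fst xi.1) <= c := leq_trans (leq_tree_cost psi Hxi) Hcost.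
split; last by move=> j /Hon /(psi_singleton_le Hlim) /leq_trans; apply.
apply: leq_trans (leq_trans (size_le_psi Hlim _) Hxic).
rewrite -(size_iota 0 (size (map fst xi.1))).
apply: (leq_size_rel_inj (P := fun j p => nth f0 (map fst xi.1) p = lab j)) => //.
- by move=> j /Hon /(In_nth_inv f0) [p Hp Ep]; exists p; rewrite ?mem_iota.
- move=> j j2 p Hj Hj2 E1 E2.
  exact: (witnessed_lab_inj class_wf HSm Hu Hw Hj Hj2 (etrans (esym E1) E2)).
Qed.

Lemma light_separating_set (R : seq row) (z : nat -> nat) :
  {subset R <= trows T} -> uniq R -> 1 < size R ->
  (forall j, j < m -> exists2 r, r \in R & col j r = z j) ->
  exists S : seq nat, [/\ forall j, j \in S -> j < m /\ psi [:: lab j] <= c,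
    size S <= c.+1 & size [seq r <- R | agree_on z S r] <= 1].
Proof.
move=> HR HuR H2 Hz.
have [S [HSn HuS HSm HSf Hw]] := minimal_separating_set class_wf z HR HuR H2.
case: (boolP (has (agree_on z S) R)) => [/hasP [u Hu Hau]|Hno].
  have Hwu : witnessed (trows T) (col^~ u) S.
    by apply: witnessed_sub HR _; apply: eq_witnessed Hw => j Hj; apply/esym/eqP/(allP Hau).
  have [Hsz Hl] := witnessed_small HuS HSm (HR _ Hu) Hwu.
  by exists S; split=> // [j Hj|]; [split; [apply: HSm | apply: Hl] | apply: ltnW].
(* No row matches z on S: the witness of the p-th column matches z on the rest. *)
have Hdrop p : p < size S ->
    size (rem_at p S) <= c /\ forall j, j \in rem_at p S -> psi [:: lab j] <= c.
  move=> Hp; have [y0 Hy0 [_ Hag0]] := Hw _ (mem_nth 0 Hp).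
  apply: (witnessed_small (uniq_rem_at p HuS) (fun j Hj => HSm j (rem_at_subset Hj)) (HR _ Hy0)).
  apply: witnessed_sub HR _; apply: eq_witnessed (witnessed_subset (@rem_at_subset _ p S) Hw).
  move=> j Hj; apply/esym/Hag0; first exact: rem_at_subset Hj.
  by apply: contraNneq (nth_notin_rem_at 0 HuS Hp) => <-.
have HS2 : 1 < size S.
  case: S HSn HuS HSm HSf Hw Hno Hdrop => [|j [|j' S']] //= _ _ HSm _ _ /hasPn Hno _.
  have [r Hr Er] := Hz j (HSm j (mem_head _ _)).
  by move: (Hno r Hr); rewrite /agree_on /= Er eqxx.
exists S; split=> //.
- move=> j Hj; split; first exact: HSm.
  pose p := if index j S == 0 then 1 else 0.
  have Hp : p < size S by rewrite /p; case: ifP => // _; apply: ltnW.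
  apply: (proj2 (Hdrop p Hp)); apply: (mem_rem_at_neq (x0 := 0) Hp Hj).
  apply/eqP => Ej; move: (index_uniq 0 Hp HuS); rewrite -Ej /p.
  by case: eqP => [->|].
- by have [+ _] := Hdrop 0 (ltnW HS2); rewrite size_rem_at ?(ltnW HS2) //; lia.
Qed.

Lemma halving_light_selector :
  halving_selector f0 T (fun f => psi [:: f] <= c) c.+1.
Proof.
move=> R HR Hu H2.
have Rn : R != [::] by case: (R) H2.
have [z Hz] := plurality_pattern Rn.
have [S [Hl Hs Hf]] := light_separating_set HR Hu H2 (fun j _ => proj1 (Hz j)).
exists S; split=> // t Ht; case: (boolP (agree_on z S t)) => Hat.
  apply: leq_trans (leq_maxl _ _); apply: leq_trans Hf.
  apply: uniq_leq_size; first exact: filter_uniq.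
  move=> r; rewrite !mem_filter => /andP [Ha ->]; rewrite andbT.
  by apply/allP => j Hj; rewrite (eqP (allP Ha j Hj)); apply: (allP Hat j Hj).
(* t differs from z at some j in S, and z j is the plurality value at j. *)
have [j Hj Hne] := allPn Hat.
apply: leq_trans (leq_maxr _ _).
have Hblock : size (block R S t) <= count (fun r => col j r == col j t) R.
  rewrite -size_filter; apply: uniq_leq_size; first exact: filter_uniq.
  by move=> r; rewrite !mem_filter => /andP [Ha ->]; rewrite andbT; apply: (allP Ha j Hj).
have Hdisj : count (fun r => col j r == col j t) R + count (fun r => col j r == z j) R <= size R.
  rewrite -count_predUI (@eq_count _ (predI _ _) pred0) ?count_pred0 ?addn0 ?count_size //.
  by move=> r /=; apply/negP => /andP [/eqP -> /eqP E]; rewrite E eqxx in Hne.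
have := (proj2 (Hz j)) (col j t); rewrite leq_divRL //; lia.
Qed.

Lemma size_trows_le : size (trows T) <= (m * k).+1 ^ c.+1.
Proof.
have wfT := class_wf.
case: (leqP (size (trows T)) 1) => H2; first by apply: leq_trans H2 _; rewrite expn_gt0.
have := size_words (column_values m k) c.+1; rewrite size_allpairs !size_iota.
apply: leq_trans.
(* A row is determined by its values on a light separating set of its own. *)
pose P (r : row) (w : seq (nat * nat)) := exists S : seq nat,
  w = [seq (j, col j r) | j <- S] /\
  forall r', r' \in trows T -> agree_on (col^~ r) S r' -> r' = r.
apply: (leq_size_rel_inj (P := P)); first exact: rows_uniq wfT.
- move=> r Hr.
  have [S [Hl Hs Hf]] := light_separating_set (fun x H => H) (rows_uniq wfT) H2
    (fun j _ => ex_intro2 _ _ r Hr erefl).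
  exists [seq (j, col j r) | j <- S].
    apply: words_mem; first by rewrite size_map.
    apply/allP => x /mapP [j /Hl [Hjm _] ->].
    by apply: (allpairs_f pair); rewrite mem_iota //= (col_lt wfT).
  exists S; split=> // r' Hr' Ha; apply: (size_le1_eq Hf); rewrite mem_filter ?Ha ?Hr' //.
  by rewrite Hr andbT; apply/allP.
- move=> r r' w Hr Hr' [S [-> U]] [S' [E _]].
  have Efst (r0 : row) s : map fst [seq (j, col j r0) | j <- s] = s by elim: s => //= j s ->.
  have ES : S = S' by rewrite -(Efst r S) E Efst.
  subst S'; move/eq_in_map: E => Hc; apply/esym/U => //.
  by apply/allP => j Hj; case: (Hc j Hj) => ->.
Qed.

Lemma light_det_tree : exists G, is_dt k T G /\ tree_cost psi G <= dt_bound (psi [::]) c k m.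
Proof.
have wfT := class_wf.
set L := (trunc_log 2 (m * k).+1).+1.
have Hrows : size (trows T) <= 2 ^ (c.+1 * L).
  apply: leq_trans size_trows_le _; rewrite (mulnC c.+1) expnM leq_exp2r //.
  by apply: ltnW; apply: trunc_log_ltn.
have [v Hv] := good_node_halving wfT halving_light_selector (fun r H => H) (rows_uniq wfT) Hrows.
have [Hdt Hp] := good_node_dt Hv.
exists [:: v]; split=> //; apply: bigmax_le_In => xi Hxi.
have [Hs Hl] := Hp xi Hxi.
apply: leq_trans (psi_le_light Hlim (c := c) _) _.
  by move=> f /In_map [fd [Hfd ->]]; apply: Hl.
rewrite size_map leq_add2r /dt_bound -/L.
apply: leq_trans (leq_mul (leqnn c) Hs) _; by apply: eq_leq; rewrite expnS expn1; nia.
Qed.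

End ClassWithBoundedNondeterministicComplexity.

(** * The type of U^{di} *)

Lemma linear_lt_exp2 a b : exists t0, forall t, t0 <= t -> a * t + b < 2 ^ t.
Proof.
pose x := (2 * (a + b)).+1.
have Hx : x < 2 ^ x by apply: ltn_expl.
have Hbase : a * (2 * x) + b < 2 ^ (2 * x).
  have Hsq : x * x < 2 ^ x * 2 ^ x by apply: ltn_mul.
  by rewrite mul2n -addnn expnD; apply: leq_trans Hsq; rewrite /x; nia.
exists (2 * x) => t Ht; rewrite -(subnKC Ht).
elim: (t - 2 * x) => [|d IH]; first by rewrite addn0.
have Hpos : 0 < 2 * x + d by rewrite /x; lia.
by rewrite addnS expnS; nia.
Qed.

Lemma dt_bound_mono e c k : {homo dt_bound e c k : m1 m2 / m1 <= m2}.
Proof.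
move=> m1 m2 H; rewrite leq_add2r leq_mul2l ltnS leq_trunc_log ?orbT //.
by rewrite ltnS leq_mul2r H orbT.
Qed.

Lemma dt_bound_eventually_lt e c k : 0 < k -> exists M, forall m, M <= m -> dt_bound e c k m < m.
Proof.
move=> Hk; set D := c * c.+1 ^ 2.
have [t0 Ht0] := linear_lt_exp2 (k * D) (k * (D + e)).+1.
exists (D * t0 + e).+1 => m Hm; rewrite /dt_bound -/D.
set t := trunc_log 2 (m * k).+1.
case: (ltnP t t0) => Ht.
  by apply: leq_trans Hm; rewrite ltnS leq_add2r leq_mul2l Ht orbT.
have H1 := Ht0 t Ht.
have H2 : 2 ^ t <= (m * k).+1 by apply: trunc_logP.
have : k * (D * t.+1 + e) < k * m by nia.
by rewrite ltn_mul2l => /andP [].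
Qed.

Lemma finite_DomP (g : nat -> nat -> Prop) (h : nat -> nat) :
  (forall n x, g n x -> x <= h n) -> (exists M, forall n, M <= n -> h n < n) ->
  finite_nat (DomP g).
Proof.
move=> Hh [M HM]; exists (iota 0 M) => n [x [Hx Hnx]].
rewrite mem_iota add0n /= ltnNge; apply/negP => /HM.
by rewrite ltnNge (leq_trans Hnx (Hh _ _ Hx)).
Qed.

Section UpperBound.
Variables (F : Type) (f0 : F) (k : nat) (C : table F -> Prop) (psi : seq F -> nat).
Hypothesis HCC : closed_class k C.
Hypothesis Hlim : limited psi.

Lemma psi_d_exists T : C T -> exists x, psi_kind k psi Kd T x.
Proof.
move=> CT; have [G HG] := dt_exists f0 (class_wf HCC CT).
exact: ex_minimum (ex_intro _ _ (ex_intro _ G (conj HG erefl))).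
Qed.

Lemma psi_a_exists T : C T -> exists x, psi_kind k psi Ka T x.
Proof.
move=> CT; have [G [_ HG]] := dt_exists f0 (class_wf HCC CT).
exact: ex_minimum (ex_intro _ _ (ex_intro _ G (conj HG erefl))).
Qed.

Lemma alpha_ndt_bounded : typ_is (U_graph k C psi Ka Ki) TAlpha ->
  exists c, forall T, C T -> exists G, is_ndt k T G /\ tree_cost psi G <= c.
Proof.
move=> [HdomA [c Hc]]; exists c => T CT.
have [x Hx] := psi_a_exists CT; have [[G [HG Ex]] _] := Hx.
exists G; split=> //; rewrite Ex.
have [n [[y Hy] Hn]] := infinite_unbounded HdomA (psi (tattr T)).
by apply: leq_trans (Hc n y Hy); apply: (proj2 Hy); exists T, (psi (tattr T)).
Qed.

Variable c : nat.
Hypothesis HC : forall T, C T -> exists G, is_ndt k T G /\ tree_cost psi G <= c.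

Lemma psi_d_le_dt_bound T x n : C T -> psi_kind k psi Kd T x -> psi (tattr T) <= n ->
  x <= dt_bound (psi [::]) c k n.
Proof.
move=> CT [_ Hmin] Hn; have [G [HG Hcost]] := light_det_tree f0 HCC Hlim HC CT.
apply: leq_trans (Hmin _ (ex_intro _ G (conj HG erefl))) (leq_trans Hcost _).
exact/dt_bound_mono/(leq_trans (size_le_psi Hlim _) Hn).
Qed.

Lemma U_di_le n x : U_graph k C psi Kd Ki n x -> x <= dt_bound (psi [::]) c k n.
Proof. by move=> [[T [x' [CT [Hx [-> Hn]]]]] _]; apply: psi_d_le_dt_bound CT Hx Hn. Qed.

Lemma Dom_U_di n : Dom (U_graph k C psi Ka Ki) n -> Dom (U_graph k C psi Kd Ki) n.
Proof.
move=> [_ [[T [x' [CT [_ [Ex' Hn]]]]] _]].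
have [y Hy] := psi_d_exists CT.
apply: (ex_maximum (b := dt_bound (psi [::]) c k n)); first by exists y, T, x'.
by move=> z [T' [z' [CT' [Hz [-> Hn']]]]]; apply: psi_d_le_dt_bound CT' Hz Hn'.
Qed.

End UpperBound.

Theorem lemma8 (k : nat) (F : Type) (C : table F -> Prop) (psi : seq F -> nat) :
  2 <= k -> inhabited F ->
  closed_class k C -> limited psi ->
  typ_is (U_graph k C psi Ka Ki) TAlpha ->
  typ_is (U_graph k C psi Kd Ki) TAlpha \/ typ_is (U_graph k C psi Kd Ki) TBeta.
Proof.
move=> Hk [f0] HCC Hlim HtypA.
have [c HC] := alpha_ndt_bounded f0 HCC HtypA.
have HdomD : ~ finite_nat (Dom (U_graph k C psi Kd Ki)).
  move=> [s Hs]; case: HtypA => HdomA _; apply: HdomA; exists s => n.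
  by move/(Dom_U_di f0 HCC Hlim HC)/Hs.
case: (classic (bounded_above (U_graph k C psi Kd Ki))) => Hbd; [left | right]; split=> //.
split=> //; apply: finite_DomP (U_di_le f0 HCC Hlim HC) _.
by apply: dt_bound_eventually_lt; apply: leq_trans Hk.
Qed.
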